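(* Let $\mathbf{A}_C\in\{0,1\}^{U\times N}$, $\mathcal{E}=\{(i,j): [\mathbf{A}_C]_{ij}=1\}$, $\mathbf{B}=\mathbf{A}_C^T\mathbf{A}_C$, and let $\mathbf{u}$ be a unit-norm eigenvector of $\mathbf{B}$ with nonnegative entries associated with $\lambda_{\max}(\mathbf{B})$. For $\mathcal{E}_{\mathcal{R}}\subseteq\mathcal{E}$ define $$f(\mathcal{E}_{\mathcal{R}})=2\sum_{(i,j)\in\mathcal{E}_{\mathcal{R}}}\mathbf{u}^T\mathbf{A}_C^T\mathbf{e}^U_i[\mathbf{u}]_j-\sum_{i=1}^{U}\ \sum_{j:(i,j)\in\mathcal{E}_{\mathcal{R}}}\ \sum_{s:(i,s)\in\mathcal{E}_{\mathcal{R}}}[\mathbf{u}]_j[\mathbf{u}]_s .$$ Then $f$ is a monotonic increasing set function: for all $\mathcal{E}_{\mathcal{R}1}\subseteq\mathcal{E}_{\mathcal{R}2}\subseteq\mathcal{E}$, $f(\mathcal{E}_{\mathcal{R}2})\ge f(\mathcal{E}_{\mathcal{R}1})$.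
   Context: $\mathbf{A}_C$ is the adjacency matrix of a bipartite user–host access graph with $U$ users and $N$ hosts; $\mathcal{E}$ is its edge set. $\mathbf{e}^U_i$ is the $U\times1$ canonical basis vector with $1$ in position $i$; $[\mathbf{u}]_j$ is the $j$-th entry of $\mathbf{u}$. *)

From mathcomp Require Import all_boot all_order all_algebra.
Set Implicit Arguments. Unset Strict Implicit. Unset Printing Implicit Defensive.
Import Order.TTheory GRing.Theory Num.Theory.
Local Open Scope ring_scope.

Section Defs.
Variables (R : realFieldType) (U N : nat).

Definition is01 (A : 'M[R]_(U, N)) : Prop := forall i j, A i j = 0 \/ A i j = 1.

Definition edges (A : 'M[R]_(U, N)) : {set 'I_U * 'I_N} :=
  [set ij | A ij.1 ij.2 == 1].

Definition ebasis (i : 'I_U) : 'cV[R]_U := delta_mx i 0.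

Definition is_eigenvalue n (M : 'M[R]_n) (mu : R) : Prop :=
  exists v : 'cV[R]_n, v != 0 /\ M *m v = mu *: v.

Definition is_lambda_max n (M : 'M[R]_n) (lam : R) : Prop :=
  is_eigenvalue M lam /\ forall mu, is_eigenvalue M mu -> mu <= lam.

Definition fset_fun (A : 'M[R]_(U, N)) (u : 'cV[R]_N)
    (ER : {set 'I_U * 'I_N}) : R :=
  2 * (\sum_(ij in ER) ((u^T *m A^T *m ebasis ij.1) 0 0 * u ij.2 0))
  - \sum_(i < U) \sum_(j < N | (i, j) \in ER) \sum_(s < N | (i, s) \in ER)
        u j 0 * u s 0.
End Defs.

From mathcomp Require Import all_boot all_order all_algebra.
From mathcomp Require Import ring.
Import Order.TTheory GRing.Theory Num.Theory.
Local Open Scope ring_scope.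

(* Grouping the edges by user, f(E_R) = \sum_i (2 w_i S_i - S_i^2) with
   w_i = [A u]_i and S_i the u-mass of the hosts that i reaches in E_R.
   Each summand is a concave parabola in S_i, nondecreasing up to its vertex
   w_i; enlarging E_R within E increases S_i without ever exceeding w_i,
   because u >= 0 and A is a {0,1}-matrix. *)

Lemma le_quad_vertex (R : realDomainType) (w a b : R) :
  a <= b -> b <= w -> 2 * w * a - a ^+ 2 <= 2 * w * b - b ^+ 2.
Proof.
move=> le_ab le_bw; rewrite -subr_ge0.
have -> : 2 * w * b - b ^+ 2 - (2 * w * a - a ^+ 2)
  = (b - a) * ((w - a) + (w - b)) by ring.
apply: mulr_ge0; first by rewrite subr_ge0.
by rewrite addr_ge0 // subr_ge0 // (le_trans le_ab).
Qed.

Section RowMass.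
Variables (R : realFieldType) (U N : nat).
Implicit Types (A : 'M[R]_(U, N)) (u : 'cV[R]_N) (ER : {set 'I_U * 'I_N}).

Definition row_mass ER u (i : 'I_U) : R := \sum_(j < N | (i, j) \in ER) u j 0.

Lemma ebasis_quadE A u i : (u^T *m A^T *m ebasis R i) 0 0 = (A *m u) i 0.
Proof.
rewrite /ebasis !mxE (bigD1 i) //= big1 => [|k /negbTE nki]; last first.
  by rewrite !mxE nki mulr0.
rewrite !mxE eqxx mulr1 addr0; apply: eq_bigr => k _.
by rewrite !mxE mulrC.
Qed.

Lemma fset_funE A u ER :
  fset_fun A u ER =
    \sum_(i < U) (2 * (A *m u) i 0 * row_mass ER u i - row_mass ER u i ^+ 2).
Proof.
rewrite /fset_fun sumrB; congr (_ - _); last first.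
  apply: eq_bigr => i _; rewrite expr2 big_distrl /=.
  by apply: eq_bigr => j _; rewrite big_distrr.
rewrite (eq_big (fun p => xpredT p.1 && ((p.1, p.2) \in ER))
                (fun p => (A *m u) p.1 0 * u p.2 0)); last 2 first.
- by case.
- by move=> ij _; rewrite ebasis_quadE.
rewrite -(pair_big_dep xpredT (fun i j => (i, j) \in ER)
            (fun i j => (A *m u) i 0 * u j 0)) mulr_sumr.
by apply: eq_bigr => i _; rewrite -mulrA -big_distrr.
Qed.

Lemma row_mass_subset u ER1 ER2 i :
  (forall j, 0 <= u j 0) -> ER1 \subset ER2 ->
  row_mass ER1 u i <= row_mass ER2 u i.
Proof.
move=> u_ge0 sub12; rewrite /row_mass [leLHS]big_mkcond [leRHS]big_mkcond /=.
apply: ler_sum => j _; case: ifP => [/(subsetP sub12) -> // | _].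
by case: ifP.
Qed.

Lemma row_mass_le_edges A u ER i :
  is01 A -> (forall j, 0 <= u j 0) -> ER \subset edges A ->
  row_mass ER u i <= (A *m u) i 0.
Proof.
move=> A01 u_ge0 subE; rewrite /row_mass mxE big_mkcond /=.
apply: ler_sum => j _; case: ifP => [/(subsetP subE) | _].
  by rewrite inE => /eqP ->; rewrite mul1r.
by case: (A01 i j) => ->; rewrite ?mul0r ?mul1r.
Qed.

End RowMass.

Theorem lemma3 (R : realFieldType) (U N : nat) (A : 'M[R]_(U, N))
  (u : 'cV[R]_N) (lam : R) :
  is01 A ->
  (u^T *m u) 0 0 = 1 ->
  (forall j, 0 <= u j 0) ->
  is_lambda_max (A^T *m A) lam ->
  (A^T *m A) *m u = lam *: u ->
  forall ER1 ER2 : {set 'I_U * 'I_N},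
    ER1 \subset ER2 -> ER2 \subset edges A ->
    fset_fun A u ER1 <= fset_fun A u ER2.
Proof.
move=> A01 _ u_ge0 _ _ ER1 ER2 sub12 sub2E.
rewrite !fset_funE; apply: ler_sum => i _; apply: le_quad_vertex.
  exact: row_mass_subset.
exact: row_mass_le_edges.
Qed.
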